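(* Consider the $r$-cGA with parameter $K$ on $r\text{-OneMax}$, with frequencies $p^{(t)}_{i,j}$ at iteration $t$, and let $\Delta_{i,r-1}:=p^{(t+1)}_{i,r-1}-p^{(t)}_{i,r-1}$. If $\frac1K\leq p^{(t)}_{i,r-1}\leq 1-\frac1K$, then, conditional on the frequencies at iteration $t$, \[\mathbb{E}(\Delta_{i,r-1}\mid p^{(t)})\geq \frac{8\,p^{(t)}_{i,r-1}(1-p^{(t)}_{i,r-1})}{9K\left(2\sqrt{3\sum_{j\neq i}p^{(t)}_{j,r-1}(1-p^{(t)}_{j,r-1})}+1\right)}.\]
   Context: Let $n\geq 1$, $r\geq 2$ be integers and $K>0$. The $r$-cGA maximizing $f$ maintains frequencies $p^{(t)}_{i,j}$ ($i\in\{1,\dots,n\}$, $j\in\{0,\dots,r-1\}$), initialized to $1/r$. In iteration $t$ it samples $x,y\in\{0,\dots,r-1\}^n$ independently, each position $i$ independently with $\Pr[x_i=j]=p^{(t)}_{i,j}$; if $f(x)<f(y)$ it swaps $x$ and $y$; then it sets $p^{(t+1)}_{i,j}=p^{(t)}_{i,j}+\frac1K(\mathbf{1}[x_i=j]-\mathbf{1}[y_i=j])$ for all $i,j$, with no margins. Here $f=r\text{-OneMax}$, $r\text{-OneMax}(x)=\sum_{i=1}^n\mathbf{1}[x_i=r-1]$. *)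

From HB Require Import structures.
From mathcomp Require Import all_boot all_order all_algebra.
From mathcomp Require Import reals.
Set Implicit Arguments. Unset Strict Implicit. Unset Printing Implicit Defensive.
Import Order.TTheory GRing.Theory Num.Theory.
Local Open Scope ring_scope.

Definition rOneMax (n r : nat) (x : {ffun 'I_n -> 'I_r}) : nat :=
  \sum_(i < n) (nat_of_ord (x i) == r.-1 : nat).

(* Frequencies p i j (= p_{i,j}); only j < r is meaningful. *)
Definition sample_prob (R : realType) (n r : nat) (p : 'I_n -> nat -> R)
  (x : {ffun 'I_n -> 'I_r}) : R :=
  \prod_(i < n) p i (nat_of_ord (x i)).

(* One iteration of the r-cGA (no margins), given the two samples x, y:
   if f(x) < f(y) they are swapped; winner w, loser l;
   p'_{i,j} = p_{i,j} + (1/K)(1[w_i=j] - 1[l_i=j]). *)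
Definition rcga_update (R : realType) (n r : nat) (K : R) (p : 'I_n -> nat -> R)
  (x y : {ffun 'I_n -> 'I_r}) : 'I_n -> nat -> R :=
  let w := if (rOneMax x < rOneMax y)%N then y else x in
  let l := if (rOneMax x < rOneMax y)%N then x else y in
  fun i j => p i j + K^-1 * (((nat_of_ord (w i) == j) : nat)%:R
                             - ((nat_of_ord (l i) == j) : nat)%:R).

Definition expected_delta_top (R : realType) (n r : nat) (K : R)
  (p : 'I_n -> nat -> R) (i : 'I_n) : R :=
  \sum_(x : {ffun 'I_n -> 'I_r}) \sum_(y : {ffun 'I_n -> 'I_r})
    @sample_prob R n r p x * @sample_prob R n r p y *
    (@rcga_update R n r K p x y i r.-1 - p i r.-1).

From HB Require Import structures.
From mathcomp Require Import all_boot all_order all_algebra.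
From mathcomp Require Import reals.
From mathcomp Require Import ring lra zify.
Set Implicit Arguments. Unset Strict Implicit. Unset Printing Implicit Defensive.
Import Order.TTheory GRing.Theory Num.Theory.
Local Open Scope ring_scope.

(* Write q_k := p_{k,r-1}.  The frequency p_{i,r-1} moves only when exactly one
   of x_i, y_i equals r-1, which happens with probability q_i (1 - q_i) in each
   order; the move is then decided by Z := (tops of x off i) - (tops of y off i).
   The two orders move p_{i,r-1} by +-1/K with opposite thresholds on Z, and
   their signs cancel except on Z in {-1, 0}, so
   E(Delta) = 2 q_i (1 - q_i) P(Z in {-1, 0}) / K >= 2 q_i (1 - q_i) P(Z = 0) / K.
   Z is a lazy symmetric walk whose k-th step is +-1 with probability
   u_k = q_k (1 - q_k) <= 1/4 each; its law, computed by the generating function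
   prod_k (u_k + (1 - 2 u_k) X + u_k X^2), is symmetric and unimodal with
   variance 2 S, S = sum_k u_k.  Chebyshev gives P(|Z| < t) >= 1 - 2 S / t^2 and
   unimodality P(|Z| < t) <= (2 t - 1) P(Z = 0); t = floor (3 sqrt (3 S) / 2) + 1
   yields P(Z = 0) >= 4 / (9 (2 sqrt (3 S) + 1)). *)

Section LazyWalk.
Variable R : realFieldType.

(* [lazy_walk l j] is the probability that a sum of independent steps, the k-th
   being +1 and -1 with probability [l`_k] each and 0 otherwise, equals [j]. *)
Fixpoint lazy_walk (l : seq R) (j : int) : R :=
  match l with
  | [::] => (j == 0)%:R
  | u :: l' => u * lazy_walk l' (j + 1) + (1 - 2 * u) * lazy_walk l' j
               + u * lazy_walk l' (j - 1)
  end.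

Definition lazy_steps (l : seq R) : bool := all (fun u => 0 <= u <= 3^-1) l.

Lemma lazy_walk_ge0 l j : lazy_steps l -> 0 <= lazy_walk l j.
Proof.
elim: l j => [|u l IHl] j /=; first by case: (j == 0).
case/andP=> /andP [u_ge0 u_le] steps_l.
have := IHl (j + 1) steps_l; have := IHl j steps_l; have := IHl (j - 1) steps_l.
by move=> *; rewrite !addr_ge0 ?mulr_ge0 //; lra.
Qed.

Lemma lazy_walk_eq0 l j : (size l < `|j|)%N -> lazy_walk l j = 0.
Proof.
elim: l j => [|u l IHl] j /=; first by case: j => [[|k]|k].
by move=> lt_l_j; rewrite !IHl ?mulr0 ?addr0 //; lia.
Qed.

Lemma lazy_walkN l j : lazy_walk l (- j) = lazy_walk l j.
Proof.
elim: l j => [|u l IHl] j /=; first by rewrite oppr_eq0.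
have -> : - j + 1 = - (j - 1) by ring.
have -> : - j - 1 = - (j + 1) by ring.
rewrite !IHl; ring.
Qed.

Lemma lazy_walk_decr l (k : nat) :
  lazy_steps l -> lazy_walk l k.+1 <= lazy_walk l k.
Proof.
elim: l k => [|u l IHl] k /=; first by case: k.
case/andP=> /andP [u_ge0 u_le] steps_l.
have decr (j : int) : 0 <= j -> lazy_walk l (j + 1) <= lazy_walk l j.
  by case: j => // m _; rewrite (_ : m%:Z + 1 = m.+1) ?IHl //; lia.
rewrite (_ : k.+1%:Z = k%:Z + 1) ?addrK; last by lia.
have d1 := decr (k%:Z + 1) isT; have d0 := decr k isT.
have : 0 <= u * (lazy_walk l (k%:Z + 1) - lazy_walk l (k%:Z + 1 + 1)).
  by rewrite mulr_ge0 // subr_ge0.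
case: k d1 d0 => [|k] d1 d0.
  rewrite add0r in d1 d0 *; rewrite sub0r lazy_walkN.
  (* by symmetry both neighbours of 0 carry [lazy_walk l 1]: this needs [u <= 1/3] *)
  have : 0 <= (1 - 3 * u) * (lazy_walk l 0 - lazy_walk l 1).
    by rewrite mulr_ge0 ?subr_ge0 //; lra.
  lra.
have := decr (k.+1%:Z - 1) isT; rewrite subrK => d_1.
have : 0 <= u * (lazy_walk l (k.+1%:Z - 1) - lazy_walk l k.+1).
  by rewrite mulr_ge0 // subr_ge0.
have : 0 <= (1 - 2 * u) * (lazy_walk l k.+1 - lazy_walk l (k.+1%:Z + 1)).
  by rewrite mulr_ge0 ?subr_ge0 //; lra.
lra.
Qed.

Lemma lazy_walk_le_at0 l j : lazy_steps l -> lazy_walk l j <= lazy_walk l 0.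
Proof.
move=> steps_l.
have le_at0 (k : nat) : lazy_walk l k <= lazy_walk l 0.
  by elim: k => // k IHk; exact: le_trans (lazy_walk_decr k steps_l) IHk.
by case: j => k; rewrite ?NegzE ?lazy_walkN.
Qed.

Lemma sum_ord_eq (K M : nat) (g : nat -> R) :
  (M < K)%N -> \sum_(m < K) (m == M :> nat)%:R * g m = g M.
Proof.
move=> lt_M_K; rewrite (bigD1 (Ordinal lt_M_K)) //= eqxx mul1r big1 ?addr0 //.
by move=> m; rewrite -val_eqE /= => /negbTE ->; rewrite mul0r.
Qed.

Definition wsum (W : nat) (g : int -> R) : R :=
  \sum_(m < (2 * W).+1) g (m%:Z - W%:Z).

Lemma eq_wsum W (g1 g2 : int -> R) : g1 =1 g2 -> wsum W g1 = wsum W g2.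
Proof. by move=> eq_g; apply: eq_bigr => m _; rewrite eq_g. Qed.

Lemma ler_wsum W (g1 g2 : int -> R) :
  (forall j, g1 j <= g2 j) -> wsum W g1 <= wsum W g2.
Proof. by move=> le_g; apply: ler_sum => m _. Qed.

Lemma wsum_lin W (g1 g2 : int -> R) a b :
  wsum W (fun j => a * g1 j + b * g2 j) = a * wsum W g1 + b * wsum W g2.
Proof. by rewrite /wsum big_split /= -!mulr_sumr. Qed.

Section WindowShift.
Variables (W : nat) (g : int -> R).
Hypothesis g_supp : forall j, (W <= `|j|)%N -> g j = 0.

Lemma wsum_succ : wsum W (fun j => g (j + 1)) = wsum W g.
Proof.
rewrite /wsum big_ord_recr big_ord_recl /= g_supp ?[g (0%:Z - _)]g_supp; try lia.
by rewrite addr0 add0r; apply: eq_bigr => m _; congr g; rewrite /bump /=; lia.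
Qed.

Lemma wsum_pred : wsum W (fun j => g (j - 1)) = wsum W g.
Proof.
rewrite /wsum [LHS]big_ord_recl [RHS]big_ord_recr /= g_supp ?[g (_%:Z - _)]g_supp; try lia.
by rewrite addr0 add0r; apply: eq_bigr => m _; congr g; rewrite /bump /=; lia.
Qed.

End WindowShift.

Lemma wsum_eq_le1 W c : wsum W (fun j => (j == c)%:R) <= 1.
Proof.
rewrite /wsum; case: (pickP (fun m : 'I_(2 * W).+1 => m%:Z - W%:Z == c)).
  move=> m0 /eqP m0_c; rewrite (bigD1 m0) //= m0_c eqxx big1 ?addr0 //.
  move=> m /eqP ne_m_m0; case: eqP => // m_c; case: ne_m_m0; apply: val_inj => /=.
  by move: m_c m0_c; lia.
by move=> no_c; rewrite big1 ?ler01 // => m _; rewrite no_c.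
Qed.

Lemma wsum_abs_lt W t : wsum W (fun j => (`|j| < t.+1)%N%:R) <= (2 * t + 1)%:R.
Proof.
elim: t => [|t IHt].
  apply: le_trans (wsum_eq_le1 W 0); apply: ler_wsum => j.
  rewrite le_eqVlt; apply/orP; left; apply/eqP.
  by congr (nat_of_bool _)%:R; apply/idP/idP; lia.
rewrite (_ : (2 * t.+1 + 1 = 2 * t + 1 + 1 + 1)%N) ?natrD; last by lia.
rewrite (@eq_wsum _ _ (fun j => 1 * (1 * (`|j| < t.+1)%N%:R + 1 * (j == t.+1%:Z)%:R)
    + 1 * (j == - t.+1%:Z)%:R)); last first.
  by move=> j; rewrite !mul1r -!natrD; congr (_%:R); case: j => k; lia.
rewrite !wsum_lin !mul1r.
have := wsum_eq_le1 W t.+1; have := wsum_eq_le1 W (- t.+1%:Z); lra.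
Qed.

Lemma lazy_walk_mass l W : (size l < W)%N -> wsum W (lazy_walk l) = 1.
Proof.
elim: l W => [|u l IHl] W /= lt_l_W.
  rewrite /wsum -[RHS](@sum_ord_eq (2 * W).+1 W (fun=> 1)); last by lia.
  by apply: eq_bigr => m _; rewrite mulr1; congr (_%:R); apply/eqP/eqP; lia.
have supp j : (W <= `|j|)%N -> lazy_walk l j = 0.
  by move=> le_W_j; apply: lazy_walk_eq0; lia.
rewrite (@eq_wsum _ _ (fun j => u * (1 * lazy_walk l (j + 1) + 1 * lazy_walk l (j - 1))
                               + (1 - 2 * u) * lazy_walk l j)); last by move=> j; ring.
by rewrite !wsum_lin wsum_succ // wsum_pred // IHl; [ring | lia].
Qed.

Lemma lazy_walk_moment2 l W : (size l < W)%N ->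
  wsum W (fun j => j%:~R ^+ 2 * lazy_walk l j) = 2 * \sum_(u <- l) u.
Proof.
elim: l W => [|u l IHl] W /= lt_l_W.
  rewrite big_nil mulr0 /wsum big1 // => m _.
  by case: eqP => [->|_]; rewrite ?mulr0 // expr0n mul0r.
have supp j : (W <= `|j|)%N -> lazy_walk l j = 0.
  by move=> le_W_j; apply: lazy_walk_eq0; lia.
pose up j := (j - 1)%:~R ^+ 2 * lazy_walk l j.
pose down j := (j + 1)%:~R ^+ 2 * lazy_walk l j.
rewrite (@eq_wsum _ _ (fun j => u * (1 * up (j + 1) + 1 * down (j - 1))
    + (1 - 2 * u) * (j%:~R ^+ 2 * lazy_walk l j))); last first.
  by move=> j; rewrite /up /down addrK subrK; ring.
rewrite !wsum_lin wsum_succ => [|j /supp]; last by rewrite /up => ->; rewrite mulr0.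
rewrite wsum_pred => [|j /supp]; last by rewrite /down => ->; rewrite mulr0.
rewrite !mul1r; have -> : wsum W up + wsum W down
    = 2 * wsum W (fun j => j%:~R ^+ 2 * lazy_walk l j) + 2 * wsum W (lazy_walk l).
  rewrite -wsum_lin -[wsum W up]mul1r -[wsum W down]mul1r -wsum_lin.
  by apply: eq_wsum => j; rewrite /up /down !intrD; ring.
rewrite lazy_walk_mass ?IHl ?big_cons; [ring | lia | lia].
Qed.

Lemma lazy_walk0_chebyshev l (t : nat) : lazy_steps l -> (0 < t)%N ->
  1 - 2 * (\sum_(u <- l) u) / t%:R ^+ 2 <= (2 * t%:R - 1) * lazy_walk l 0.
Proof.
move=> steps_l t_gt0.
pose W := maxn (size l).+1 t.
have t2_gt0 : 0 < t%:R ^+ 2 :> R by rewrite exprn_gt0 // ltr0n.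
have f0_ge0 := lazy_walk_ge0 0 steps_l.
have : wsum W (lazy_walk l) <= wsum W (fun j => lazy_walk l 0 * (`|j| < t)%N%:R
                                  + (t%:R ^+ 2)^-1 * (j%:~R ^+ 2 * lazy_walk l j)).
  apply: ler_wsum => j.
  have fj_ge0 := lazy_walk_ge0 j steps_l.
  case: ltnP => [_ | le_t_j].
    have : 0 <= (t%:R ^+ 2)^-1 * (j%:~R ^+ 2 * lazy_walk l j).
      by rewrite mulr_ge0 ?invr_ge0 ?sqr_ge0 // mulr_ge0 ?sqr_ge0.
    by rewrite mulr1; have := lazy_walk_le_at0 j steps_l; lra.
  rewrite mulr0 add0r ler_pdivlMl // ler_wpM2r //.
  rewrite (_ : j%:~R ^+ 2 = `|j|%N%:R ^+ 2); last by case: (j) => k; rewrite ?NegzE ?intrN ?sqrrN.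
  by rewrite lerXn2r ?nnegrE ?ler0n // ler_nat.
rewrite wsum_lin lazy_walk_mass ?lazy_walk_moment2; try lia.
have := wsum_abs_lt W t.-1; rewrite prednK //.
have -> : (2 * t.-1 + 1)%:R = 2 * t%:R - 1 :> R.
  by rewrite -[in RHS](prednK t_gt0) -natr1 natrD natrM; ring.
move=> /(ler_wpM2l f0_ge0); rewrite [_ / _]mulrC; lra.
Qed.

Definition lazy_step (u : R) : {poly R} :=
  u%:P + (1 - 2 * u)%:P * 'X + u%:P * 'X^2.

Lemma coef_prod_lazy_step l (m : nat) :
  (\prod_(u <- l) lazy_step u)`_m = lazy_walk l (m%:Z - (size l)%:Z).
Proof.
elim: l m => [|u l IHl] m.
  by rewrite big_nil coef1 /= subr0; congr (_%:R); apply/eqP/eqP; lia.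
rewrite big_cons; set G := \prod_(_ <- l) _.
rewrite /lazy_step mulrDl mulrDl !coefD coefCM -!mulrA !coefCM !coefXM /=.
rewrite (_ : m%:Z - (size l).+1%:Z + 1 = m%:Z - (size l)%:Z) -?IHl; last by lia.
congr (_ + _ + _).
  case: m => [|m] /=; first by rewrite lazy_walk_eq0 ?mulr0 //; lia.
  by rewrite IHl; congr (_ * lazy_walk l _); lia.
case: m => [|[|m]] /=; try by rewrite lazy_walk_eq0 ?mulr0 //; lia.
by rewrite IHl; congr (_ * lazy_walk l _); lia.
Qed.

Definition bernoulli_gf (q : R) : {poly R} := (1 - q)%:P + q%:P * 'X.

Lemma bernoulli_gf_mul_flip q :
  bernoulli_gf q * bernoulli_gf (1 - q) = lazy_step (q * (1 - q)).
Proof.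
rewrite /bernoulli_gf /lazy_step !(rmorphB, rmorphM, rmorph1) expr2 /=.
by rewrite (_ : (2 : R)%:P = 2) ?rmorphD ?rmorph1 //; ring.
Qed.

End LazyWalk.

Lemma lazy_walk0_lb (R : realType) (l : seq R) : lazy_steps l ->
  4 / (9 * (2 * Num.sqrt (3 * \sum_(u <- l) u) + 1)) <= lazy_walk l 0.
Proof.
move=> steps_l.
have S_ge0 : 0 <= \sum_(u <- l) u.
  by rewrite big_seq sumr_ge0 // => u /(allP steps_l) /andP [].
set S := \sum_(u <- l) u in S_ge0 *; set s := Num.sqrt (3 * S).
have s_ge0 : 0 <= s by apply: sqrtr_ge0.
have s2 : s ^+ 2 = 3 * S by rewrite sqr_sqrtr // mulr_ge0.
pose t := (Num.truncn (3 / 2 * s)).+1.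
have t_ub : t%:R <= 3 / 2 * s + 1 :> R.
  by rewrite /t -natr1 lerD2r truncn_le mulr_ge0 //; lra.
have t_lb : 3 / 2 * s < t%:R by rewrite -truncn_le_nat.
have := lazy_walk0_chebyshev (t := t) steps_l isT; rewrite -/S => cheb.
have f0_ge0 := lazy_walk_ge0 0 steps_l.
have tail : 2 * S / t%:R ^+ 2 <= 8 / 27.
  rewrite ler_pdivrMr ?exprn_gt0 ?ltr0n //.
  have : (3 / 2 * s) ^+ 2 <= t%:R ^+ 2 by rewrite !expr2; nra.
  by rewrite exprMn s2; lra.
have : (2 * t%:R - 1) * lazy_walk l 0 <= (3 * s + 1) * lazy_walk l 0.
  by rewrite ler_wpM2r //; lra.
have : 0 <= s * lazy_walk l 0 by rewrite mulr_ge0.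
rewrite ler_pdivrMr; last by rewrite mulr_gt0 //; lra.
nra.
Qed.

Section rcGA.
Variables (R : realType) (n r' : nat) (p : 'I_n -> nat -> R) (i : 'I_n).
Hypothesis p_ge0 : forall k j, (j < r'.+2)%N -> 0 <= p k j.
Hypothesis p_sum1 : forall k, \sum_(j < r'.+2) p k j = 1.

Local Notation sample := {ffun 'I_n -> 'I_r'.+2}.
Local Notation q k := (p k r'.+1).

Definition is_top (j : 'I_r'.+2) : bool := nat_of_ord j == r'.+1.

(* [off_count true] counts the non-top values, so that the fitness difference
   of [x] and [y] outside [i] is [off_count false x + off_count true y - n_off]. *)
Definition off_count (b : bool) (x : sample) : nat :=
  \sum_(k < n | k != i) (is_top (x k) (+) b : nat).

Definition n_off : nat := \sum_(k < n | k != i) 1%N.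

Lemma off_count_le b x : (off_count b x <= n_off)%N.
Proof. by apply: leq_sum => k _; case: (_ (+) _). Qed.

Lemma off_count_compl x : (off_count false x + off_count true x)%N = n_off.
Proof. by rewrite -big_split; apply: eq_bigr => k _; case: is_top. Qed.

Lemma rOneMax_off x : rOneMax x = (is_top (x i) + off_count false x)%N.
Proof.
by rewrite /rOneMax (bigD1 i) //=; congr (_ + _)%N; apply: eq_bigr => k _; rewrite addbF.
Qed.

Lemma sum_not_top k : \sum_(j < r'.+2 | ~~ is_top j) p k j = 1 - q k.
Proof.
by rewrite -(p_sum1 k) [in RHS](bigD1 ord_max) //= [p k _ + _]addrC addrK.
Qed.

Lemma sum_is_top k (a : bool) :
  \sum_(j < r'.+2) p k j * (is_top j == a)%:R = if a then q k else 1 - q k.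
Proof.
rewrite (bigD1 ord_max) //= /is_top eqxx -sum_not_top.
case: a => /=; rewrite ?mulr1 ?mulr0 ?add0r.
  by rewrite big1 ?addr0 // => j; rewrite -val_eqE /= => /negbTE ->; rewrite mulr0.
rewrite big_mkcond [RHS]big_mkcond; apply: eq_bigr => j _; rewrite /is_top -val_eqE /=.
by case: eqP; rewrite /= ?mulr0 ?mulr1.
Qed.

Lemma gf_position k b :
  \sum_(j < r'.+2) (p k j)%:P * 'X^(is_top j (+) b)
  = bernoulli_gf (if b then 1 - q k else q k).
Proof.
rewrite (bigD1 ord_max) //= /is_top eqxx.
have -> : \sum_(j < r'.+2 | j != ord_max) (p k j)%:P * 'X^((nat_of_ord j == r'.+1) (+) b)
          = (\sum_(j < r'.+2 | ~~ is_top j) p k j)%:P * 'X^b.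
  rewrite rmorph_sum mulr_suml; apply: eq_big => // j /negbTE.
  by rewrite -val_eqE /= => ->.
rewrite sum_not_top /bernoulli_gf; case: b => /=; rewrite ?expr0 ?expr1 ?mulr1.
  by rewrite (_ : 1 - (1 - q k) = q k) 1?addrC //; ring.
by rewrite addrC.
Qed.

Definition sample_gf (b a : bool) : {poly R} :=
  \sum_(x : sample) (sample_prob p x * (is_top (x i) == a)%:R)%:P * 'X^(off_count b x).

Lemma sample_gfE b a : sample_gf b a =
  (if a then q i else 1 - q i)%:P
  * \prod_(k < n | k != i) bernoulli_gf (if b then 1 - q k else q k).
Proof.
pose F k (j : 'I_r'.+2) := if k == i then (p k j * (is_top j == a)%:R)%:P
                           else (p k j)%:P * 'X^(is_top j (+) b).
transitivity (\sum_(x : sample) \prod_k F k (x k)).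
  apply: eq_bigr => x _; rewrite (bigD1 i) //= /F eqxx.
  under eq_bigr => k ne_k_i do rewrite (negbTE ne_k_i).
  rewrite big_split /= prodrXr -rmorph_prod /sample_prob (bigD1 i) //=.
  by rewrite /off_count mulrA -polyCM; congr (_%:P * _); ring.
rewrite -bigA_distr_bigA (bigD1 i) //= /F eqxx -rmorph_sum sum_is_top.
by congr (_ * _); apply: eq_bigr => k ne_k_i; rewrite (negbTE ne_k_i) gf_position.
Qed.

Lemma coef_sample_gf_mul a b m : (sample_gf false a * sample_gf true b)`_m =
  \sum_(x : sample) \sum_(y : sample) sample_prob p x * sample_prob p y
     * (is_top (x i) == a)%:R * (is_top (y i) == b)%:R
     * (m == off_count false x + off_count true y)%:R.
Proof.
rewrite /sample_gf mulr_suml coef_sum; apply: eq_bigr => x _.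
rewrite mulr_sumr coef_sum; apply: eq_bigr => y _.
by rewrite mulrACA -polyCM -exprD coefCM coefXn; ring.
Qed.

Lemma sum_sample_pairs a b (g : nat -> R) :
  \sum_(x : sample) \sum_(y : sample) sample_prob p x * sample_prob p y
     * (is_top (x i) == a)%:R * (is_top (y i) == b)%:R
     * g (off_count false x + off_count true y)%N
  = \sum_(m < (2 * n_off).+1) g m * (sample_gf false a * sample_gf true b)`_m.
Proof.
symmetry; under eq_bigr => m _ do rewrite coef_sample_gf_mul mulr_sumr.
rewrite exchange_big /=; apply: eq_bigr => x _.
under eq_bigr => m _ do rewrite mulr_sumr.
rewrite exchange_big /=; apply: eq_bigr => y _.
have lt_xy : (off_count false x + off_count true y < (2 * n_off).+1)%N.
  by have := off_count_le false x; have := off_count_le true y; lia.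
by rewrite -(sum_ord_eq g lt_xy) mulr_sumr; apply: eq_bigr => m _; ring.
Qed.

Definition pm1 (c : bool) : R := if c then 1 else -1.

Lemma rcga_update_top K x y :
  let m := (off_count false x + off_count true y)%N in
  rcga_update K p x y i r'.+1 - q i =
  K^-1 * ((is_top (x i) == true)%:R * (is_top (y i) == false)%:R * pm1 (n_off <= m.+1)%N
        + (is_top (x i) == false)%:R * (is_top (y i) == true)%:R * pm1 (m <= n_off)%N).
Proof.
rewrite /= /rcga_update !rOneMax_off -(off_count_compl y).
move: (off_count false x) (off_count false y) (off_count true y) => X Y Y'.
rewrite /pm1 /is_top.
case tx: (nat_of_ord (x i) == r'.+1); case ty: (nat_of_ord (y i) == r'.+1);
  case: ifP => lt_xy /=; rewrite ?tx ?ty /= ?mul0r ?mulr0 ?add0r ?addr0 ?mul1r.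
all: try (rewrite ifT; last by lia); try (rewrite ifF; last by lia); ring.
Qed.

Lemma top_freq_le1 k : q k <= 1.
Proof.
have : 0 <= \sum_(j < r'.+2 | ~~ is_top j) p k j by rewrite sumr_ge0 // => j _; apply: p_ge0.
by rewrite sum_not_top; lra.
Qed.

Definition off_variances : seq R := [seq q k * (1 - q k) | k <- index_enum 'I_n & k != i].

Lemma size_off_variances : size off_variances = n_off.
Proof. by rewrite size_map -sum1_size big_filter. Qed.

Lemma lazy_steps_off_variances : lazy_steps off_variances.
Proof.
apply/allP => _ /mapP [k _ ->]; have := p_ge0 k (ltnSn r'.+1); have := top_freq_le1 k.
by move=> *; apply/andP; split; nra.
Qed.

Lemma sample_gf_pair a b : sample_gf false a * sample_gf true b =
  ((if a then q i else 1 - q i) * (if b then q i else 1 - q i))%:P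
  * \prod_(u <- off_variances) lazy_step u.
Proof.
rewrite !sample_gfE polyCM mulrACA -big_split big_map big_filter.
by congr (_ * _); apply: eq_bigr => k _; exact: bernoulli_gf_mul_flip.
Qed.

Lemma expected_delta_topE K : expected_delta_top r'.+2 K p i =
  K^-1 * (q i * (1 - q i)) * \sum_(m < (2 * n_off).+1)
    (pm1 (n_off <= m.+1)%N + pm1 (m <= n_off)%N) * lazy_walk off_variances (m%:Z - n_off%:Z).
Proof.
have -> : expected_delta_top r'.+2 K p i = K^-1 *
  (\sum_(x : sample) \sum_(y : sample) sample_prob p x * sample_prob p y
      * (is_top (x i) == true)%:R * (is_top (y i) == false)%:R
      * pm1 (n_off <= (off_count false x + off_count true y).+1)%N
   + \sum_(x : sample) \sum_(y : sample) sample_prob p x * sample_prob p y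
      * (is_top (x i) == false)%:R * (is_top (y i) == true)%:R
      * pm1 (off_count false x + off_count true y <= n_off)%N).
  rewrite /expected_delta_top -big_split mulr_sumr; apply: eq_bigr => x _.
  rewrite -big_split mulr_sumr; apply: eq_bigr => y _.
  by rewrite /= rcga_update_top; ring.
rewrite (sum_sample_pairs true false (fun m => pm1 (n_off <= m.+1)%N)).
rewrite (sum_sample_pairs false true (fun m => pm1 (m <= n_off)%N)).
rewrite !sample_gf_pair -big_split !mulr_sumr.
apply: eq_bigr => m _; rewrite !coefCM coef_prod_lazy_step size_off_variances /=; ring.
Qed.

Lemma expected_delta_top_ge K : 0 < K ->
  K^-1 * (q i * (1 - q i)) * (2 * lazy_walk off_variances 0)
  <= expected_delta_top r'.+2 K p i.
Proof.
move=> K_gt0; rewrite expected_delta_topE ler_wpM2l //.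
  by rewrite !mulr_ge0 ?invr_ge0 ?subr_ge0 ?top_freq_le1 ?p_ge0 ?(ltW K_gt0).
have lt_off : (n_off < (2 * n_off).+1)%N by lia.
rewrite (bigD1 (Ordinal lt_off)) //= /pm1 leqnSn leqnn subrr lerDl.
apply: sumr_ge0 => m _; apply: mulr_ge0; last exact: lazy_walk_ge0 lazy_steps_off_variances.
by case: ifP => ?; case: ifP => ?; try lra; lia.
Qed.

End rcGA.

Theorem lemma3 (R : realType) (n r : nat) (K : R) (p : 'I_n -> nat -> R)
  (i : 'I_n) :
  (1 <= n)%N -> (2 <= r)%N -> 0 < K ->
  (forall k j, (j < r)%N -> 0 <= p k j) ->
  (forall k, \sum_(j < r) p k j = 1) ->
  K^-1 <= p i r.-1 <= 1 - K^-1 ->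
  @expected_delta_top R n r K p i >=
    8 * p i r.-1 * (1 - p i r.-1) /
    (9 * K * (2 * Num.sqrt (3 * \sum_(k < n | k != i) p k r.-1 * (1 - p k r.-1)) + 1)).
Proof.
(* Neither [1 <= n] nor the margins on [p i r.-1] are needed. *)
move=> _ r_ge2 K_gt0; case: r r_ge2 => [|[|r']] // _ p_ge0 p_sum1 _ /=.
have steps := lazy_steps_off_variances i p_ge0 p_sum1.
have -> : \sum_(k < n | k != i) p k r'.+1 * (1 - p k r'.+1) = \sum_(u <- off_variances r' p i) u.
  by rewrite big_map big_filter.
set s := Num.sqrt _; set v := p i r'.+1 * (1 - p i r'.+1).
have v_ge0 : 0 <= v by rewrite mulr_ge0 ?subr_ge0 ?p_ge0 ?(top_freq_le1 p_ge0 p_sum1).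
have s_ge0 : 0 <= s := sqrtr_ge0 _.
apply: le_trans (expected_delta_top_ge i p_ge0 p_sum1 K_gt0).
have -> : 8 * p i r'.+1 * (1 - p i r'.+1) / (9 * K * (2 * s + 1))
          = K^-1 * v * (2 * (4 / (9 * (2 * s + 1)))).
  by rewrite /v; field; rewrite gt_eqF ?mulr_gt0 //; lra.
rewrite -/v; apply: ler_wpM2l; first by rewrite mulr_ge0 ?invr_ge0 ?(ltW K_gt0).
by apply: ler_wpM2l; [lra | exact: lazy_walk0_lb steps].
Qed.
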